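(* Let $n\geq7$ and let $\mathcal R(P_{n-5})=u_1,\ldots,u_p$. If $u_iu_k>_{\mathcal R}u_ju_l$ in $F(J(P_{n-5})^2)$ for some indices $i,j,k,l$, then $x_nx_{n-1}x_{n-2}^2x_{n-4}^2u_iu_k>_{\mathcal R}x_nx_{n-1}x_{n-2}^2x_{n-4}^2u_ju_l$ in $F(J(P_n)^2)$.
   Context: For $m\geq 1$, $P_m$ is the path graph on vertices $x_1,\ldots,x_m$ with edges $\{x_i,x_{i+1}\}$; $J(P_m)$ is its cover ideal (generated by $\prod_{x\in C}x$, $C$ a minimal vertex cover); $G(I)$ denotes minimal monomial generators and $F(I^2)=\{ab:a,b\in G(I)\}$. The rooted list $\mathcal R(P_m)$: $\mathcal R(P_1)$ empty; $\mathcal R(P_2)=x_1,x_2$; $\mathcal R(P_3)=x_2,x_1x_3$; $\mathcal R(P_4)=x_1x_3,x_2x_3,x_2x_4$; for $m\geq5$, if $\mathcal R(P_{m-2})=u_1,\ldots,u_r$ and $\mathcal R(P_{m-3})=v_1,\ldots,v_s$, then $\mathcal R(P_m)=x_{m-1}u_1,\ldots,x_{m-1}u_r,x_mx_{m-2}v_1,\ldots,x_mx_{m-2}v_s$; it lists each element of $G(J(P_m))$ once. With $\mathcal R(P_m)=u_1,\ldots,u_q$, each $M\in F(J(P_m)^2)$ is $u_1^{a_1}\cdots u_q^{a_q}$ with $a_i\geq0$, $\sum a_i=2$; its maximal expression is the one with lexicographically largest exponent vector, and $M>_{\mathcal R}N$ on $F(J(P_m)^2)$ iff the maximal-expression exponent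 vector of $M$ is lexicographically larger than that of $N$. *)

From mathcomp Require Import all_boot.
Set Implicit Arguments. Unset Strict Implicit. Unset Printing Implicit Defensive.

(* Monomials in the variables x_1, x_2, ... : exponent functions nat -> nat
   (x_v has exponent [M v]; index 0 is unused). *)
Definition mono := nat -> nat.
Definition mone : mono := fun _ => 0.
Definition xv (i : nat) : mono := fun v => if v == i then 1 else 0.
Definition mmul (f g : mono) : mono := fun v => f v + g v.
Definition meq (f g : mono) : Prop := forall v, f v = g v.

Fixpoint Rlist (m : nat) : seq mono :=
  match m with
  | 0 => [::]
  | 1 => [::]
  | 2 => [:: xv 1; xv 2]
  | 3 => [:: xv 2; mmul (xv 1) (xv 3)]
  | 4 => [:: mmul (xv 1) (xv 3); mmul (xv 2) (xv 3); mmul (xv 2) (xv 4)]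
  | S (S ((S ((S (S _)) as m2)) as m3)) =>
      [seq mmul (xv m.-1) u | u <- Rlist m3]
        ++ [seq mmul (mmul (xv m) (xv m.-2)) v | v <- Rlist m2]
  end.

Definition expr_of (us : seq mono) (a : seq nat) : mono :=
  fun v => sumn [seq p.1 * p.2 v | p <- zip a us].

Definition is_expr (us : seq mono) (M : mono) (a : seq nat) : Prop :=
  size a = size us /\ sumn a = 2 /\ meq (expr_of us a) M.

Fixpoint lexgt (a b : seq nat) : bool :=
  match a, b with
  | x :: a', y :: b' => (y < x) || ((x == y) && lexgt a' b')
  | _, _ => false
  end.

Definition is_max_expr (us : seq mono) (M : mono) (a : seq nat) : Prop :=
  is_expr us M a /\ forall b, is_expr us M b -> b = a \/ lexgt a b.

(* M >_R N in F(J(P_m)^2): both lie in F(J(P_m)^2) (i.e. have an expression)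
   and the maximal expression of M is lex-larger than that of N. *)
Definition Rgt (m : nat) (M N : mono) : Prop :=
  exists a b, is_max_expr (Rlist m) M a /\ is_max_expr (Rlist m) N b /\ lexgt a b.

From mathcomp Require Import all_boot zify.

(* The elements of R(P_n) come in four consecutive blocks:
   x_{n-1}x_{n-3}R(P_{n-4}), then x_{n-1}x_{n-2}x_{n-4}R(P_{n-5}), then
   x_n x_{n-2}x_{n-4}R(P_{n-5}), then elements divisible by x_{n-3}.
   Let W = x_n x_{n-1}x_{n-2}^2x_{n-4}^2 and N a product of two elements of
   R(P_{n-5}). Since W N is not divisible by x_{n-3} and has x_n-degree one,
   every expression of W N takes one factor from each middle block, so the
   expressions of W N are those of N with both positions shifted by the
   block offsets. An expression is the exponent vector of two positions
   p <= q, and it is lexicographically larger exactly when (p, q) is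
   lexicographically smaller; shifting both positions preserves this order,
   so maximal expressions and their comparison carry over to R(P_n). *)

Set Implicit Arguments.
Unset Strict Implicit.

Definition pair_vec (S p q : nat) : seq nat := mkseq (fun t => (t == p) + (t == q)) S.

Lemma size_pair_vec S p q : size (pair_vec S p q) = S.
Proof. exact: size_mkseq. Qed.

Lemma nth_pair_vec S p q t :
  t < S -> nth 0 (pair_vec S p q) t = (t == p) + (t == q).
Proof. exact: nth_mkseq. Qed.

Lemma sum_delta S i (g : nat -> nat) :
  i < S -> \sum_(t < S) (t == i :> nat) * g t = g i.
Proof.
move=> hi; rewrite (eq_bigr (fun t : 'I_S => if t == i :> nat then g t else 0)).
  by rewrite -big_mkcond big_ord1_eq hi.
by move=> t _; case: (_ == _); rewrite ?mul1n.
Qed.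

Lemma sum_pair_vec S p q (g : nat -> nat) : p < S -> q < S ->
  \sum_(t < S) ((t == p :> nat) + (t == q :> nat)) * g t = g p + g q.
Proof.
by move=> hp hq; rewrite (eq_bigr _ (fun t _ => mulnDl _ _ _)) big_split /= !sum_delta.
Qed.

Lemma sumn_pair_vec S p q : p < S -> q < S -> sumn (pair_vec S p q) = 2.
Proof.
move=> hp hq; rewrite sumnE big_map /index_iota -{1}(subn0 S) big_mkord.
rewrite -[2]/(1 + 1) -(@sum_pair_vec S p q (fun=> 1) hp hq).
by apply: eq_bigr => t _; rewrite muln1.
Qed.

Lemma nth_sumn_eq0 a t : sumn a = 0 -> nth 0 a t = 0.
Proof. by elim: a t => [|x a IH] [|t] //=; [lia | move=> h; apply: IH; lia]. Qed.

Lemma sumn_eq1 a :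
  sumn a = 1 -> exists2 p, p < size a & forall t, nth 0 a t = (t == p).
Proof.
elim: a => [|[|[|x]] a IH] //= h.
- by have [p hp ep] := IH h; exists p.+1; last case.
- by exists 0 => // -[|t] //=; rewrite nth_sumn_eq0 //; lia.
Qed.

Lemma sumn_eq2 a : sumn a = 2 ->
  exists p q, [/\ p <= q, q < size a & a = pair_vec (size a) p q].
Proof.
move=> a2; suff [p [q [pq qa ea]]] : exists p q, [/\ p <= q, q < size a &
    forall t, nth 0 a t = (t == p) + (t == q)].
  exists p, q; split => //.
  by apply: (@eq_from_nth _ 0); rewrite ?size_pair_vec // => t ht; rewrite nth_pair_vec.
elim: a a2 => [|[|[|[|x]]] a IH] //= h.
- have [p [q [pq qa ea]]] := IH h.
  by exists p.+1, q.+1; split => //; case.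
- have [q qa eq1] := @sumn_eq1 a ltac:(lia).
  by exists 0, q.+1; split => // -[|t] /=; rewrite ?eq1.
- by exists 0, 0; split => // -[|t] //=; rewrite nth_sumn_eq0 //; lia.
Qed.

Lemma expr_ofE us a v : size a = size us ->
  expr_of us a v = \sum_(t < size us) nth 0 a t * nth mone us t v.
Proof.
elim: us a => [|u us IH] [|x a] //=; first by rewrite big_ord0.
by move=> [sz]; rewrite big_ord_recl -IH.
Qed.

Lemma expr_of_pair_vec us p q v : p < size us -> q < size us ->
  expr_of us (pair_vec (size us) p q) v = nth mone us p v + nth mone us q v.
Proof.
move=> hp hq; rewrite expr_ofE ?size_pair_vec //.
rewrite -(@sum_pair_vec (size us) p q (fun t => nth mone us t v)) //.
by apply: eq_bigr => t _; rewrite nth_pair_vec.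
Qed.

Lemma lexgt_irr a : ~~ lexgt a a.
Proof. by elim: a => //= x a IH; rewrite ltnn eqxx. Qed.

Lemma lexgt_asym a b : lexgt a b -> ~~ lexgt b a.
Proof.
elim: a b => [|x a IH] [|y b] //= /orP[lt|/andP[/eqP-> h]].
  by rewrite ltnNge (ltnW lt) eq_sym (gtn_eqF lt).
by rewrite ltnn eqxx IH.
Qed.

Lemma lexgt_nth a b r : size a = size b -> r < size a ->
  (forall t, t < r -> nth 0 a t = nth 0 b t) -> nth 0 b r < nth 0 a r -> lexgt a b.
Proof.
elim: a b r => [|x a IH] [|y b] [|r] //= [sz] lt eqab ltr; first by rewrite ltr.
have /= -> := eqab 0 (ltn0Sn r); rewrite ltnn eqxx /=.
by apply: (IH _ r) => // t tr; apply: (eqab t.+1).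
Qed.

Lemma lexgt_pair_vec S p q p' q' : p <= q -> p' <= q' -> q < S -> q' < S ->
  lexgt (pair_vec S p q) (pair_vec S p' q') <-> p < p' \/ p = p' /\ q < q'.
Proof.
have lt_lexgt x y x' y' : x <= y -> x' <= y' -> y < S -> y' < S ->
    x < x' \/ x = x' /\ y < y' -> lexgt (pair_vec S x y) (pair_vec S x' y').
  move=> xy xy' yS yS' lt; apply: (@lexgt_nth _ _ (if x < x' then x else y));
    rewrite ?size_pair_vec //; first by case: ifP; lia.
  - by move=> t ht; rewrite !nth_pair_vec; case: ifP ht; lia.
  - by rewrite !nth_pair_vec; case: ifP; lia.
move=> pq pq' qS qS'; split; last exact: lt_lexgt.
move=> gt; case: (ltngtP p p') => [|lt'|ep]; first by left.
  by have := lexgt_asym gt; rewrite lt_lexgt //; left.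
subst p'; case: (ltngtP q q') => [|lt'|eq']; first by right.
  by have := lexgt_asym gt; rewrite lt_lexgt //; right.
by subst q'; rewrite (negPf (lexgt_irr _)) in gt.
Qed.

Definition factor_pair (us : seq mono) (M : mono) (p q : nat) : Prop :=
  [/\ p < size us, q < size us & meq (mmul (nth mone us p) (nth mone us q)) M].

Lemma factor_pairC us M p q : factor_pair us M p q -> factor_pair us M q p.
Proof. by case=> hp hq e; split=> // v; rewrite -(e v) /mmul addnC. Qed.

Lemma is_expr_pair_vec us M p q : p < size us -> q < size us ->
  is_expr us M (pair_vec (size us) p q) <-> factor_pair us M p q.
Proof.
move=> hp hq; rewrite /is_expr size_pair_vec sumn_pair_vec //.
split=> [[_ [_ e]]|[_ _ e]]; first by split=> // v; rewrite -(e v) expr_of_pair_vec.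
by do 2!split=> //; move=> v; rewrite expr_of_pair_vec // -(e v).
Qed.

Lemma is_expr_factor_pair us M a : is_expr us M a ->
  exists p q, [/\ p <= q, a = pair_vec (size us) p q & factor_pair us M p q].
Proof.
case=> sz [sum2 e]; have [p [q [pq qa ea]]] := sumn_eq2 sum2.
rewrite sz in qa ea; exists p, q; split=> //.
by apply/is_expr_pair_vec; rewrite -?ea //; apply: leq_ltn_trans qa.
Qed.

Definition least_factor_pair (us : seq mono) (M : mono) (p q : nat) : Prop :=
  [/\ p <= q, factor_pair us M p q &
      forall b c, factor_pair us M b c -> p < b \/ p = b /\ q <= c].

Lemma is_max_expr_least us M p q : p <= q -> q < size us ->
  is_max_expr us M (pair_vec (size us) p q) <-> least_factor_pair us M p q.
Proof.
move=> pq qs; have ps := leq_ltn_trans pq qs.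
rewrite /is_max_expr is_expr_pair_vec //; split=> [[fpq maxpq]|[_ fpq least]].
  have least_sorted b c : b <= c -> factor_pair us M b c ->
      p < b \/ p = b /\ q <= c.
    move=> bc fbc; have [bs cs _] := fbc.
    have [//|ltbc] : (p < b \/ p = b /\ q <= c) \/ (b < p \/ b = p /\ c < q) by lia.
    have gt : lexgt (pair_vec (size us) b c) (pair_vec (size us) p q).
      exact/lexgt_pair_vec.
    have [same|lt] := maxpq _ (proj2 (is_expr_pair_vec M bs cs) fbc).
      by rewrite same (negPf (lexgt_irr _)) in gt.
    by rewrite (negPf (lexgt_asym lt)) in gt.
  split=> // b c fbc; have [bc|cb] := leqP b c; first exact: least_sorted.
  have := least_sorted c b (ltnW cb) (factor_pairC fbc); lia.
split=> // _ /is_expr_factor_pair [b [c [bc -> fbc]]].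
have [bs cs _] := fbc.
have [lt|[eb le]] := least b c fbc; first by right; apply/lexgt_pair_vec; [..|left].
subst b; have [->|ne] := eqVneq c q; first by left.
by right; apply/lexgt_pair_vec => //; right; split=> //; lia.
Qed.

Lemma xvE i v : xv i v = (v == i).
Proof. by []. Qed.

Lemma nth_map_mone (f : mono -> mono) s t :
  t < size s -> nth mone (map f s) t = f (nth mone s t).
Proof.
by move=> ts; rewrite (set_nth_default (f mone)) ?size_map // (nth_map mone).
Qed.

Lemma Rlist_rec m : 5 <= m ->
  Rlist m = [seq mmul (xv (m - 1)) u | u <- Rlist (m - 2)]
         ++ [seq mmul (mmul (xv m) (xv (m - 2))) u | u <- Rlist (m - 3)].
Proof. by case: m => [|[|[|[|[|m]]]]]. Qed.

Lemma size_Rlist_rec m : 5 <= m ->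
  size (Rlist m) = size (Rlist (m - 2)) + size (Rlist (m - 3)).
Proof. by move=> m5; rewrite Rlist_rec // size_cat !size_map. Qed.

Lemma all_Rlist_eq0 m v : m < v -> all (fun u : mono => u v == 0) (Rlist m).
Proof.
elim/ltn_ind: m => m IH mv; have [m5|] := leqP 5 m; last first.
  by case: m {IH} mv => [|[|[|[|[|]]]]] //; case: v => [|[|[|[|[|v]]]]].
rewrite Rlist_rec // all_cat !all_map; apply/andP.
by split; apply: sub_all (IH _ _ _); try lia;
  move=> u /eqP u0 /=; rewrite /mmul u0 !xvE; lia.
Qed.

Lemma nth_Rlist_eq0 m t v : m < v -> nth mone (Rlist m) t v = 0.
Proof.
move=> mv; have [ts|ts] := ltnP t (size (Rlist m)); last by rewrite nth_default.
exact/eqP/(all_nthP mone (all_Rlist_eq0 mv)).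
Qed.

Lemma size_Rlist_head m : 4 <= m -> size (Rlist (m - 2)) <= size (Rlist m).
Proof.
move=> m4; have [m5|] := leqP 5 m; first by rewrite [leqRHS]size_Rlist_rec // leq_addr.
by case: m m4 => [|[|[|[|[|]]]]] //.
Qed.

Lemma nth_Rlist_head m t v : 4 <= m -> t < size (Rlist (m - 2)) ->
  nth mone (Rlist m) t v = xv (m - 1) v + nth mone (Rlist (m - 2)) t v.
Proof.
move=> m4 ts; have [m5|] := leqP 5 m.
  by rewrite Rlist_rec // nth_cat size_map ts nth_map_mone.
case: m m4 ts => [|[|[|[|[|]]]]] // _.
by case: t => [|[|]] //= _; rewrite /mmul addnC.
Qed.

Lemma nth_Rlist_tail m c v : 5 <= m -> c < size (Rlist (m - 3)) ->
  nth mone (Rlist m) (size (Rlist (m - 2)) + c) v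
  = xv m v + xv (m - 2) v + nth mone (Rlist (m - 3)) c v.
Proof.
move=> m5 cs.
by rewrite Rlist_rec // nth_cat size_map ltnNge leq_addr /= addKn nth_map_mone.
Qed.

Lemma nth_Rlist_tail_gt0 m t :
  4 <= m -> size (Rlist (m - 2)) <= t < size (Rlist m) -> 0 < nth mone (Rlist m) t m.
Proof.
move=> m4 /andP[t1 t2]; have [m5|] := leqP 5 m.
  rewrite -(subnKC t1) nth_Rlist_tail ?xvE ?eqxx //.
  by rewrite size_Rlist_rec // in t2; lia.
case: m m4 t1 t2 => [|[|[|[|[|]]]]] // _.
by case: t => [|[|[|[|]]]].
Qed.

Section MiddleBlocks.

Variable n : nat.
Hypothesis n_ge7 : 7 <= n.

Local Notation L := (Rlist n).
Local Notation U := (Rlist (n - 5)).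
Local Notation o := (size (Rlist (n - 4))).
Local Notation s := (size (Rlist (n - 5))).

Let sub22 : n - 2 - 2 = n - 4. Proof. lia. Qed.
Let sub23 : n - 2 - 3 = n - 5. Proof. lia. Qed.
Let sub32 : n - 3 - 2 = n - 5. Proof. lia. Qed.
Let sub31 : n - 3 - 1 = n - 4. Proof. lia. Qed.
Let sub21 : n - 2 - 1 = n - 3. Proof. lia. Qed.

Let size_Rlist_n2 : size (Rlist (n - 2)) = o + s.
Proof. by rewrite size_Rlist_rec ?sub22 ?sub23 //; lia. Qed.

Let size_Rlist_n3 : s <= size (Rlist (n - 3)).
Proof. by rewrite -sub32 size_Rlist_head //; lia. Qed.

Lemma size_Rlist_blocks : o + s + s <= size L.
Proof. by rewrite [leqRHS]size_Rlist_rec ?size_Rlist_n2 ?leq_add2l //; lia. Qed.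

Lemma nth_Rlist_B b v : b < s ->
  nth mone L (o + b) v = xv (n - 1) v + xv (n - 2) v + xv (n - 4) v + nth mone U b v.
Proof.
move=> bs; rewrite nth_Rlist_head ?size_Rlist_n2; try lia.
have := @nth_Rlist_tail (n - 2) b v; rewrite sub22 sub23 => -> //; lia.
Qed.

Lemma nth_Rlist_C c v : c < s ->
  nth mone L (o + s + c) v = xv n v + xv (n - 2) v + xv (n - 4) v + nth mone U c v.
Proof.
move=> cs; rewrite -size_Rlist_n2 nth_Rlist_tail; try lia.
rewrite nth_Rlist_head ?sub32 ?sub31; lia.
Qed.

Lemma Rlist_index_cases t : t < size L ->
  [\/ 0 < nth mone L t (n - 3), exists2 b, b < s & t = o + b
     | exists2 c, c < s & t = o + s + c].
Proof.
move=> tL; have [to|ot] := ltnP t o.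
  constructor 1; rewrite nth_Rlist_head ?size_Rlist_n2; try lia.
  by rewrite nth_Rlist_head ?sub22 ?sub21 ?xvE ?eqxx; lia.
have [tB|Bt] := ltnP t (o + s); first by constructor 2; exists (t - o); lia.
have [tC|Ct] := ltnP t (o + s + s); first by constructor 3; exists (t - o - s); lia.
rewrite size_Rlist_rec in tL; last lia.
constructor 1; rewrite -(subnKC (_ : size (Rlist (n - 2)) <= t)) ?nth_Rlist_tail; try lia.
have := @nth_Rlist_tail_gt0 (n - 3) (t - size (Rlist (n - 2))); rewrite sub32; lia.
Qed.

Definition lift_mono : mono :=
  fun v => xv n v + xv (n - 1) v + 2 * xv (n - 2) v + 2 * xv (n - 4) v.

Variable N : mono.
Hypothesis N_supp : forall v, n - 5 < v -> N v = 0.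

Lemma factor_pair_lift b c : factor_pair U N b c ->
  factor_pair L (mmul lift_mono N) (o + b) (o + s + c).
Proof.
case=> bs cs e; have := size_Rlist_blocks; split; try lia.
by move=> v; rewrite /mmul nth_Rlist_B // nth_Rlist_C // -(e v) /lift_mono /mmul; lia.
Qed.

Lemma factor_pair_blocks p q : p <= q -> factor_pair L (mmul lift_mono N) p q ->
  exists b c, [/\ p = o + b, q = o + s + c & factor_pair U N b c].
Proof.
(* At x_{n-3} the outer blocks are excluded; the x_n-degree one of W N then
   forces one factor from each middle block. *)
move=> pq [pL qL e]; have at_n3 := e (n - 3); have at_n := e n.
rewrite /mmul /lift_mono !xvE !N_supp in at_n3 at_n; try lia.
case: (Rlist_index_cases pL) => [p0|[b bs eq_p]|[c cs eq_p]]; first lia;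
  case: (Rlist_index_cases qL) => [q0|[b' bs' eq_q]|[c' cs' eq_q]]; try lia; subst p q.
- by move: at_n; rewrite !nth_Rlist_B // !xvE !nth_Rlist_eq0; lia.
- exists b, c'; split=> //; split=> // v; have := e v.
  by rewrite /mmul nth_Rlist_B // nth_Rlist_C // /lift_mono; lia.
- by move: at_n; rewrite !nth_Rlist_C // !xvE !nth_Rlist_eq0; lia.
Qed.

Lemma least_factor_pair_lift p q : least_factor_pair U N p q ->
  least_factor_pair L (mmul lift_mono N) (o + p) (o + s + q).
Proof.
case=> pq fpq least; split; [lia | exact: factor_pair_lift |] => b' c' fbc'.
have [bc|cb] := leqP b' c'.
  have [b [c [-> -> fbc]]] := factor_pair_blocks bc fbc'.
  have := least b c fbc; lia.
have [b [c [-> -> _]]] := factor_pair_blocks (ltnW cb) (factor_pairC fbc').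
by case: fpq; lia.
Qed.

End MiddleBlocks.

Theorem lemma3p16 (n : nat) (hn : 7 <= n) (i j k l : nat)
  (hi : i < size (Rlist (n - 5))) (hj : j < size (Rlist (n - 5)))
  (hk : k < size (Rlist (n - 5))) (hl : l < size (Rlist (n - 5))) :
  Rgt (n - 5)
      (mmul (nth mone (Rlist (n - 5)) i) (nth mone (Rlist (n - 5)) k))
      (mmul (nth mone (Rlist (n - 5)) j) (nth mone (Rlist (n - 5)) l)) ->
  Rgt n
      (mmul (fun v => xv n v + xv (n - 1) v + 2 * xv (n - 2) v + 2 * xv (n - 4) v)
            (mmul (nth mone (Rlist (n - 5)) i) (nth mone (Rlist (n - 5)) k)))
      (mmul (fun v => xv n v + xv (n - 1) v + 2 * xv (n - 2) v + 2 * xv (n - 4) v)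
            (mmul (nth mone (Rlist (n - 5)) j) (nth mone (Rlist (n - 5)) l))).
Proof.
move=> [a [b [max_a [max_b gt_ab]]]].
have [p1 [q1 [pq1 ea [_ q1s _]]]] := is_expr_factor_pair max_a.1.
have [p2 [q2 [pq2 eb [_ q2s _]]]] := is_expr_factor_pair max_b.1.
subst a b; move: max_a max_b; rewrite !is_max_expr_least // => max_a max_b.
rewrite lexgt_pair_vec // in gt_ab.
have supp x y v : n - 5 < v ->
    mmul (nth mone (Rlist (n - 5)) x) (nth mone (Rlist (n - 5)) y) v = 0.
  by move=> hv; rewrite /mmul !nth_Rlist_eq0.
have := size_Rlist_blocks hn.
set o := size (Rlist (n - 4)); set s := size (Rlist (n - 5)) in q1s q2s * => hL.
exists (pair_vec (size (Rlist n)) (o + p1) (o + s + q1)),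
       (pair_vec (size (Rlist n)) (o + p2) (o + s + q2)).
split; [|split].
- apply/is_max_expr_least; [lia | lia |].
  exact (least_factor_pair_lift hn (supp i k) max_a).
- apply/is_max_expr_least; [lia | lia |].
  exact (least_factor_pair_lift hn (supp j l) max_b).
- apply/lexgt_pair_vec; lia.
Qed.
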